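(* Let $d\ge1$, let $|\cdot|$ be any norm on $\mathbb{R}^d$, let $p\in(0,+\infty)$ and let $X$ be an $\mathbb{R}^d$-valued random vector with distribution $\mu$ such that $\int_{\mathbb{R}^d}|\xi|^p\mu(d\xi)<+\infty$. Let $(a_N)_{N\ge1}$ be an $L^p$-optimal greedy quantization sequence for $X$. Assume that there exists $b\in(0,\tfrac12)$ such that the $b$-maximal function $\Psi_b$ associated with $(a_N)_{N\ge1}$ satisfies $\int_{\mathbb{R}^d}\Psi_b^{\frac{p}{p+d}}\,d\mu<+\infty$. Then $$\limsup_{N\to+\infty}N^{\frac1d}\,e_p(a^{(N)},X)<+\infty.$$
   Context: For $\Gamma\subset\mathbb{R}^d$ and $r>0$ put $e_r(\Gamma,X)=\big(\mathbb{E}\,d(X,\Gamma)^r\big)^{1/r}$ with $d(\xi,\Gamma)=\inf_{a\in\Gamma}|\xi-a|$ ($d(\xi,\emptyset)=+\infty$). A sequence $(a_N)_{N\ge1}$ in $\mathbb{R}^d$ is an $L^p$-optimal greedy quantization sequence if, writing $a^{(N)}=\{a_1,\dots,a_N\}$ and $a^{(0)}=\emptyset$, one has $a_{N+1}\in\operatorname{argmin}_{\xi\in\mathbb{R}^d}e_p(a^{(N)}\cup\{\xi\},X)$ for every $N\ge0$. For $b\in(0,\frac12)$, the $b$-maximal function associated with $(a_N)$ is $$\Psi_b(\xi)=\sup_{N\ge1}\frac{\lambda_d\big(B(\xi,b\,d(\xi,a^{(N)}))\big)}{\mu\big(B(\xi,b\,d(\xi,a^{(N)}))\big)}\in[0,+\infty],\quad\xi\in\mathbb{R}^d,$$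 where $\lambda_d$ is Lebesgue measure, $B(x,\rho)$ is the closed ball of center $x$ and radius $\rho$ for $|\cdot|$, and $\frac{0}{0}$, $\frac{c}{0}$ are interpreted with the conventions $\frac10=+\infty$. *)

From HB Require Import structures.
From mathcomp Require Import all_boot all_order all_algebra.
From mathcomp Require Import all_classical all_reals all_analysis.
Set Implicit Arguments. Unset Strict Implicit. Unset Printing Implicit Defensive.
Import Order.TTheory GRing.Theory Num.Theory.
Local Open Scope classical_set_scope.
Local Open Scope ring_scope.

(* R^d is represented by d.-tuple R, which MathComp-Analysis equips with the
   product (= Borel) sigma-algebra generated by the coordinate maps. *)

Section Defs.
Variables (R : realType) (d : nat).
Local Notation T := (d.-tuple R).

Definition vadd (x y : T) : T := [tuple tnth x i + tnth y i | i < d].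
Definition vsub (x y : T) : T := [tuple tnth x i - tnth y i | i < d].
Definition vscale (a : R) (x : T) : T := [tuple a * tnth x i | i < d].
Definition vzero : T := [tuple (0 : R) | i < d].

Definition is_norm (nrm : T -> R) : Prop :=
  [/\ forall x, nrm x = 0 -> x = vzero,
      forall a x, nrm (vscale a x) = `|a| * nrm x
    & forall x y, nrm (vadd x y) <= nrm x + nrm y].

Definition cball (nrm : T -> R) (x : T) (r : R) : set T :=
  [set y | nrm (vsub y x) <= r].

(* Lebesgue measure lambda_d (as Lebesgue outer measure: infimum of the total
   volume of countable covers by closed boxes; it coincides with Lebesgue
   measure on Borel sets, in particular on closed balls). *)
Definition box (l u : T) : set T :=
  [set x | forall i, tnth l i <= tnth x i <= tnth u i].
Definition box_vol (l u : T) : R := \prod_(i < d) (tnth u i - tnth l i).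
Definition lebesgue_d (A : set T) : \bar R :=
  ereal_inf [set s | exists (l u : nat -> T),
    [/\ (forall k i, tnth (l k) i <= tnth (u k) i),
        A `<=` \bigcup_k box (l k) (u k)
      & s = (\sum_(0 <= k <oo) (box_vol (l k) (u k))%:E)%E]].

(* distance to a set: d(xi, Gamma) = inf_{a in Gamma} |xi - a|, = +oo if empty *)
Definition dist_set (nrm : T -> R) (xi : T) (G : set T) : \bar R :=
  ereal_inf [set (nrm (vsub xi a))%:E | a in G].

(* L^r quantization error e_r(Gamma, X) = (E d(X,Gamma)^r)^(1/r), mu = law of X *)
Definition qerr (nrm : T -> R) (mu : probability T R) (r : R) (G : set T)
  : \bar R :=
  ((\int[mu]_xi (dist_set nrm xi G `^ r)) `^ r^-1)%E.

(* a^(N) = {a_1, ..., a_N}  (a : nat -> T, only indices >= 1 are used) *)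
Definition first_pts (a : nat -> T) (N : nat) : set T :=
  [set a k | k in [set k : nat | (1 <= k <= N)%N]].

Definition greedy_seq (nrm : T -> R) (mu : probability T R) (p : R)
    (a : nat -> T) : Prop :=
  forall (N : nat) (xi : T),
    (qerr nrm mu p (first_pts a N.+1) <=
       qerr nrm mu p (first_pts a N `|` [set xi]))%E.

Definition ratio_ball (mu : probability T R) (B : set T) : \bar R :=
  if mu B == 0%E then +oo%E else (lebesgue_d B * ((fine (mu B))^-1)%:E)%E.

Definition maxfun (nrm : T -> R) (mu : probability T R) (a : nat -> T)
    (b : R) (xi : T) : \bar R :=
  ereal_sup [set ratio_ball mu
                 (cball nrm xi (b * fine (dist_set nrm xi (first_pts a N))))
            | N in [set N : nat | (1 <= N)%N]].

End Defs.

From HB Require Import structures.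
From mathcomp Require Import all_boot all_order all_algebra.
From mathcomp Require Import all_classical all_reals all_analysis.
From mathcomp Require Import measurable_realfun ring lra zify.
Set Implicit Arguments. Unset Strict Implicit. Unset Printing Implicit Defensive.
Import Order.TTheory GRing.Theory Num.Theory.
Local Open Scope classical_set_scope.
Local Open Scope ring_scope.

(* Write u N = E d(X, a^(N))^p.  Since a_(N+1) does at least as well as any
   other point xi, comparing with xi itself on the ball
   B = B(xi, b d(xi, a^(N))), where xi is closer than the old points, gives
     ((1 - b)^p - b^p) d(xi, a^(N))^p mu(B) <= u N - u (N + 1).
   The ball has Lebesgue measure of order (b d(xi, a^(N)))^d, so the maximal
   function gives mu(B) >= c d(xi, a^(N))^d / Psi_b(xi), whence
     d(xi, a^(N))^(p + d) <= C (u N - u (N + 1)) Psi_b(xi).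
   Raising to the power p / (p + d) and integrating in xi yields
   u N ^ (1 + d / p) <= C' (u N - u (N + 1)), and such a recursion forces
   u N = O(N ^ (- p / d)). *)

Lemma measurable_bigmax (dT : measure_display) (X : measurableType dT)
    (R : realType) (I : eqType) (s : seq I) (f : I -> X -> R) :
  (forall i, measurable_fun setT (f i)) ->
  measurable_fun setT (fun x => \big[Order.max/0]_(i <- s) f i x).
Proof.
move=> mf; elim: s => [|i s IH].
  by under eq_fun do rewrite big_nil; exact: measurable_cst.
under eq_fun do rewrite big_cons.
exact: measurable_maxr.
Qed.

Lemma ge0_le_integral_nonmeasurable (dT : measure_display) (X : measurableType dT)
    (R : realType) (mu : {measure set X -> \bar R}) (D : set X) (f g : X -> \bar R) :
  (forall x, D x -> (0 <= f x)%E) -> (forall x, D x -> (f x <= g x)%E) ->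
  (\int[mu]_(x in D) f x <= \int[mu]_(x in D) g x)%E.
Proof.
move=> f0 fg.
have g0 x : D x -> (0 <= g x)%E by move=> Dx; exact: le_trans (f0 x Dx) (fg x Dx).
rewrite !ge0_integralE //.
apply: ge_ereal_sup => _ [h hf <-]; apply: ereal_sup_ubound; exists h => //= x.
apply: (le_trans (hf x)); rewrite /patch; case: ifP => // /set_mem Dx.
exact: fg.
Qed.

Lemma integral_add_indic (dT : measure_display) (X : measurableType dT) (R : realType)
    (mu : {measure set X -> \bar R}) (f : X -> R) (c : R) (B : set X) :
  measurable_fun setT f -> (forall x, 0 <= f x) -> 0 <= c -> measurable B ->
  (\int[mu]_x (f x + c * \1_B x)%:E = \int[mu]_x (f x)%:E + c%:E * mu B)%E.
Proof.
move=> mf f0 c0 mB.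
under eq_integral do rewrite EFinD EFinM.
rewrite ge0_integralD //; last 4 first.
- by move=> x _; rewrite lee_fin.
- exact/measurable_EFinP.
- by move=> x _; rewrite lee_fin mulr_ge0.
- by apply/measurable_EFinP; apply: measurable_funM => //; exact: measurable_indic.
rewrite ge0_integralZl //; last exact/measurable_EFinP/measurable_indic.
by rewrite integral_indic // setIT.
Qed.

Lemma bounded_limn_esup_lty (R : realType) (v : nat -> \bar R) (B : R) :
  (forall N, (v N <= B%:E)%E) -> (limn_esup v < +oo)%E.
Proof.
move=> vB; rewrite limn_esup_lim.
have -> : limn (esups v) = ereal_inf (range (esups v)).
  by apply/cvg_lim => //; exact: cvg_esups_inf.
apply: le_lt_trans (ereal_inf_lbound _) _; first by exists 0%N.
apply: le_lt_trans (ltry B); apply: ge_ereal_sup => _ [k _ <-]; exact: vB.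
Qed.

Lemma powR_add_le (R : realType) (x y p : R) : 0 <= x -> 0 <= y -> 0 < p ->
  (x + y) `^ p <= 2 `^ p * (x `^ p + y `^ p).
Proof.
move=> x0 y0 p0.
wlog yx : x y x0 y0 / y <= x.
  move=> H; case: (leP y x) => [|/ltW xy]; first exact: H.
  by rewrite addrC [x `^ p + _]addrC; exact: H.
apply: (@le_trans _ _ ((2 * x) `^ p)).
  by apply: ge0_ler_powR; rewrite ?nnegrE ?addr_ge0 ?mulr_ge0 ?(ltW p0) //; lra.
by rewrite powRM // ler_wpM2l ?powR_ge0 // lerDl powR_ge0.
Qed.

Lemma ler_of_powRV (R : realType) (x y p : R) : 0 <= x -> 0 <= y -> 0 < p ->
  x `^ p^-1 <= y `^ p^-1 -> x <= y.
Proof.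
move=> x0 y0 p0 /(ge0_ler_powR (ltW p0)).
rewrite !nnegrE !powR_ge0 -!powRrM mulVf ?gt_eqF // !powRr1 //.
by apply.
Qed.

Lemma powR_le_mixed (R : realType) (D A p : R) (n : nat) :
  0 < p -> 0 <= D -> 0 <= A -> D `^ p <= A ->
  D `^ p <= (A * D ^+ n) `^ (p / (p + n%:R)).
Proof.
move=> p0 D0 A0 DA; have [->|Dn0] := eqVneq D 0; first by rewrite powR0 ?gt_eqF ?powR_ge0.
have pn0 : p + n%:R != 0 by rewrite gt_eqF // (lt_le_trans p0) // lerDl ler0n.
have -> : D `^ p = (D `^ p * D ^+ n) `^ (p / (p + n%:R)).
  rewrite -powR_mulrn // -powRD ?Dn0 ?implybT // -powRrM.
  by congr (_ `^ _); field.
apply: ge0_ler_powR; rewrite ?nnegrE ?mulr_ge0 ?powR_ge0 ?exprn_ge0 ?divr_ge0 ?(ltW p0) //.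
  by rewrite invr_ge0 (le_trans (ltW p0)) // lerDl ler0n.
by rewrite ler_wpM2r ?exprn_ge0.
Qed.

Section NormFacts.
Variables (R : realType) (d : nat) (nrm : d.-tuple R -> R).
Hypothesis nrmN : is_norm nrm.
Local Notation T := (d.-tuple R).

Lemma tnth_vadd (x y : T) i : tnth (vadd x y) i = tnth x i + tnth y i.
Proof. by rewrite /vadd tnth_mktuple. Qed.

Lemma tnth_vsub (x y : T) i : tnth (vsub x y) i = tnth x i - tnth y i.
Proof. by rewrite /vsub tnth_mktuple. Qed.

Lemma tnth_vscale c (x : T) i : tnth (vscale c x) i = c * tnth x i.
Proof. by rewrite /vscale tnth_mktuple. Qed.

Lemma tnth_vzero i : tnth (vzero R d) i = 0.
Proof. by rewrite /vzero tnth_mktuple. Qed.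

Lemma norm_vscale c (x : T) : nrm (vscale c x) = `|c| * nrm x.
Proof. by case: nrmN. Qed.

Lemma norm_vadd_le (x y : T) : nrm (vadd x y) <= nrm x + nrm y.
Proof. by case: nrmN. Qed.

Lemma norm_vzero : nrm (vzero R d) = 0.
Proof.
have -> : vzero R d = vscale 0 (vzero R d).
  by apply: eq_from_tnth => i; rewrite tnth_vscale tnth_vzero mul0r.
by rewrite norm_vscale normr0 mul0r.
Qed.

Lemma vsub_vscaleN1 (x y : T) : vsub x y = vadd x (vscale (-1) y).
Proof.
by apply: eq_from_tnth => i; rewrite tnth_vadd tnth_vsub tnth_vscale mulN1r.
Qed.

Lemma norm_ge0 (x : T) : 0 <= nrm x.
Proof.
have := norm_vadd_le x (vscale (-1) x).
rewrite -vsub_vscaleN1 norm_vscale normrN normr1 mul1r.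
have -> : vsub x x = vzero R d.
  by apply: eq_from_tnth => i; rewrite tnth_vsub tnth_vzero subrr.
by rewrite norm_vzero; lra.
Qed.

Lemma norm_vsubC (x y : T) : nrm (vsub x y) = nrm (vsub y x).
Proof.
have -> : vsub x y = vscale (-1) (vsub y x).
  by apply: eq_from_tnth => i; rewrite tnth_vscale !tnth_vsub mulN1r opprB.
by rewrite norm_vscale normrN normr1 mul1r.
Qed.

Lemma norm_vsub_triangle (x y z : T) :
  nrm (vsub x z) <= nrm (vsub x y) + nrm (vsub y z).
Proof.
have -> : vsub x z = vadd (vsub x y) (vsub y z).
  by apply: eq_from_tnth => i; rewrite tnth_vadd !tnth_vsub addrA subrK.
exact: norm_vadd_le.
Qed.

Lemma norm_vsub_le (x y : T) : nrm (vsub x y) <= nrm x + nrm y.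
Proof.
rewrite vsub_vscaleN1; apply: (le_trans (norm_vadd_le _ _)).
by rewrite norm_vscale normrN normr1 mul1r.
Qed.

Lemma norm_le_vsub (x y : T) : nrm x <= nrm y + nrm (vsub x y).
Proof.
have {1}-> : x = vadd y (vsub x y).
  by apply: eq_from_tnth => i; rewrite tnth_vadd tnth_vsub addrC subrK.
exact: norm_vadd_le.
Qed.

Definition sup_norm (y : T) : R := \big[Order.max/0]_(i < d) `|tnth y i|.

Lemma sup_norm_ge0 (y : T) : 0 <= sup_norm y.
Proof. exact: bigmax_ge_id. Qed.

Lemma sup_norm_ge (y : T) i : `|tnth y i| <= sup_norm y.
Proof. exact: le_bigmax. Qed.

Lemma sup_norm_le (y : T) e : 0 <= e -> (forall i, `|tnth y i| <= e) -> sup_norm y <= e.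
Proof. by move=> e0 h; apply: bigmax_le => // i _; exact: h. Qed.

Lemma sup_norm_lt (y : T) e : 0 < e -> (forall i, `|tnth y i| < e) -> sup_norm y < e.
Proof. by move=> e0 h; apply/bigmax_lt => // i _; exact: h. Qed.

Definition unit_vec (i : 'I_d) : T := [tuple ((i == j)%:R : R) | j < d].

Definition first_coords (k : nat) (y : T) : T :=
  [tuple if (j < k)%N then tnth y j else 0 | j < d].

Lemma first_coordsS (k : 'I_d) (y : T) :
  first_coords k.+1 y = vadd (first_coords k y) (vscale (tnth y k) (unit_vec k)).
Proof.
apply: eq_from_tnth => i.
rewrite tnth_vadd tnth_vscale /first_coords /unit_vec !tnth_mktuple.
rewrite eq_sym -val_eqE ltnS /=.
case: (ltngtP i k) => [ik|ki|ik].
- by rewrite mulr0 addr0.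
- by rewrite mulr0 addr0.
- by rewrite mulr1 add0r (val_inj ik).
Qed.

Lemma norm_first_coords_le (y : T) (k : nat) : (k <= d)%N ->
  nrm (first_coords k y) <= \sum_(j < d | (j < k)%N) `|tnth y j| * nrm (unit_vec j).
Proof.
elim: k => [_|k IH kd].
  have -> : first_coords 0 y = vzero R d.
    by apply: eq_from_tnth => i; rewrite tnth_vzero /first_coords ?tnth_mktuple.
  by rewrite norm_vzero big_pred0.
rewrite (first_coordsS (Ordinal kd)) (bigD1 (Ordinal kd)) //= addrC.
apply: (le_trans (norm_vadd_le _ _)); rewrite norm_vscale lerD //.
rewrite (eq_bigl (fun j : 'I_d => (j < k)%N)); first exact: IH (ltnW kd).
by move=> i; rewrite ltnS -val_eqE /=; case: ltngtP.
Qed.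

Definition sup_norm_const : R := 1 + \sum_(j < d) nrm (unit_vec j).

Lemma sup_norm_const_gt0 : 0 < sup_norm_const.
Proof.
rewrite /sup_norm_const ltr_pwDl //.
by apply: sumr_ge0 => i _; exact: norm_ge0.
Qed.

Lemma norm_le_sup_norm (y : T) : nrm y <= sup_norm_const * sup_norm y.
Proof.
have {1}-> : y = first_coords d y.
  by apply: eq_from_tnth => i; rewrite /first_coords tnth_mktuple ltn_ord.
apply: (le_trans (norm_first_coords_le _ (leqnn d))).
rewrite (eq_bigl xpredT); last by move=> i; rewrite ltn_ord.
apply: (@le_trans _ _ (\sum_(j < d) sup_norm y * nrm (unit_vec j))).
  apply: ler_sum => i _; apply: ler_wpM2r; [exact: norm_ge0 | exact: sup_norm_ge].
rewrite -mulr_sumr mulrC; apply: ler_wpM2r; first exact: sup_norm_ge0.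
by rewrite /sup_norm_const lerDr.
Qed.

End NormFacts.

Section NormMeasurable.
Variables (R : realType) (d : nat) (nrm : d.-tuple R -> R).
Hypothesis nrmN : is_norm nrm.
Local Notation T := (d.-tuple R).

Lemma measurable_vsub (y : T) : measurable_fun setT (fun x : T => vsub x y).
Proof.
apply/measurable_fun_tnthP => i.
rewrite (_ : _ \o _ = (fun x : T => tnth x i - tnth y i)); last first.
  by apply: funext => x /=; rewrite tnth_vsub.
by apply: measurable_funB => //; exact: measurable_tnth.
Qed.

Lemma measurable_sup_norm : measurable_fun setT (@sup_norm R d).
Proof.
apply: (@measurable_bigmax _ T R _ _ (fun i (x : T) => `|tnth x i|)) => i.
by apply: measurableT_comp; [exact: normr_measurable | exact: measurable_tnth].
Qed.

(* [rat_point] enumerates the points with rational coordinates. *)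
Definition rat_point (n : nat) : T :=
  [tuple ratr (tnth (odflt [tuple 0 | _ < d] (unpickle n)) i) | i < d].

Lemma rat_point_near (x : T) e : 0 < e ->
  exists n, sup_norm (vsub x (rat_point n)) < e /\ sup_norm (vsub (rat_point n) x) < e.
Proof.
move=> e0.
have xe i : tnth x i - e < tnth x i + e by rewrite ltrBlDr -addrA ltrDl addr_gt0.
pose q : d.-tuple rat := [tuple xchoose (rat_in_itvoo (xe i)) | i < d].
have qE i : tnth (rat_point (pickle q)) i = ratr (xchoose (rat_in_itvoo (xe i))).
  by rewrite /rat_point pickleK /= !tnth_mktuple.
have qx i : `|tnth x i - tnth (rat_point (pickle q)) i| < e.
  have := xchooseP (rat_in_itvoo (xe i)); rewrite in_itv /= -qE => /andP[? ?].
  by rewrite ltr_norml; apply/andP; split; lra.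
exists (pickle q); split; apply: sup_norm_lt => // i; rewrite tnth_vsub //.
by rewrite distrC.
Qed.

Lemma norm_lt_rat_point (x : T) r : nrm x < r <->
  exists n, nrm (rat_point n) + sup_norm_const nrm * sup_norm (vsub x (rat_point n)) < r.
Proof.
have C0 := sup_norm_const_gt0 nrmN.
split => [xr|[n]]; last first.
  apply: le_lt_trans; apply: (le_trans (norm_le_vsub nrmN x (rat_point n))).
  by rewrite lerD2l; exact: norm_le_sup_norm.
pose e := (r - nrm x) / (2 * sup_norm_const nrm).
have e0 : 0 < e by rewrite divr_gt0 ?subr_gt0 // mulr_gt0.
have [n [xq qx]] := rat_point_near x e0; exists n.
have nrm_q := norm_le_vsub nrmN (rat_point n) x.
have nrm_qx := norm_le_sup_norm nrmN (vsub (rat_point n) x).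
have Cqx : sup_norm_const nrm * sup_norm (vsub (rat_point n) x) < sup_norm_const nrm * e.
  by rewrite ltr_pM2l.
have Cxq : sup_norm_const nrm * sup_norm (vsub x (rat_point n)) < sup_norm_const nrm * e.
  by rewrite ltr_pM2l.
have Ce : sup_norm_const nrm * e * 2 = r - nrm x by rewrite /e; field; rewrite gt_eqF.
lra.
Qed.

(* [nrm] is the pointwise infimum of the measurable majorants
   [x |-> nrm q + C * sup_norm (x - q)], [q] rational. *)
Lemma measurable_norm : measurable_fun setT nrm.
Proof.
apply: (measurability _ (RGenInftyO.measurableE R)) => //.
move=> /= _ [_ [r ->] <-].
pose g n (x : T) := nrm (rat_point n) + sup_norm_const nrm * sup_norm (vsub x (rat_point n)).
have mg n : measurable_fun setT (g n).
  apply: measurable_funD; first exact: measurable_cst.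
  apply: measurable_funM; first exact: measurable_cst.
  exact: measurableT_comp measurable_sup_norm (measurable_vsub _).
have -> : setT `&` nrm @^-1` `]-oo, r[ = \bigcup_n (setT `&` g n @^-1` `]-oo, r[).
  apply/seteqP; split => x /=; rewrite /= ?in_itv /=.
    by move=> [_ /norm_lt_rat_point [n xn]]; exists n => //=; rewrite in_itv.
  by move=> [n _ /=]; rewrite in_itv /= => -[_ xn]; split => //; apply/norm_lt_rat_point; exists n.
apply: bigcupT_measurable => n.
exact: mg n measurableT _ (measurable_itv _).
Qed.

Lemma measurable_norm_vsub (y : T) : measurable_fun setT (fun x => nrm (vsub x y)).
Proof. exact: measurableT_comp measurable_norm (measurable_vsub y). Qed.

End NormMeasurable.

Section LebesgueOuterMeasure.
Variable R : realType.

Lemma lebesgue_measure_itv_cc (a b : R) : a <= b ->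
  lebesgue_measure (`[a, b]%classic : set R) = (b - a)%:E.
Proof.
move=> ab; rewrite lebesgue_measure_itv /=; case: ifP => // /negbT.
by rewrite lte_fin -leNgt => ba; rewrite (le_anti (andb_true_intro (conj ab ba))) subrr.
Qed.

(* Integrate the pointwise bound over [[a, b]] and exchange sum and integral. *)
Lemma weighted_itv_cover (a b c : R) (w lo hi : nat -> R) :
  a <= b -> 0 <= c -> (forall k, 0 <= w k) -> (forall k, lo k <= hi k) ->
  (forall t, a <= t <= b ->
     (c%:E <= \sum_(0 <= k <oo) (w k * \1_(`[lo k, hi k]%classic) t)%:E)%E) ->
  (((b - a) * c)%:E <= \sum_(0 <= k <oo) (w k * (hi k - lo k))%:E)%E.
Proof.
move=> ab c0 w0 lohi cover.
pose I k : set R := `[lo k, hi k]%classic.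
pose f k t := (w k * \1_(I k) t)%:E.
have f0 k t : (0 <= f k t)%E by rewrite lee_fin mulr_ge0.
have mf k : measurable_fun setT (f k).
  apply/measurable_EFinP; apply: measurable_funM; first exact: measurable_cst.
  by apply: measurable_indic; exact: measurable_itv.
pose F t := (\sum_(0 <= k <oo) f k t)%E.
have -> : ((b - a) * c)%:E = (\int[lebesgue_measure]_(t in `[a, b]%classic) c%:E)%E.
  rewrite integral_cst; last exact: measurable_itv.
  by rewrite EFinM muleC -lebesgue_measure_itv_cc.
apply: (@le_trans _ _ (\int[lebesgue_measure]_(t in `[a, b]%classic) F t)%E).
  apply: ge0_le_integral_nonmeasurable => [t _|t /=]; first by rewrite lee_fin.
  by rewrite in_itv /=; exact: cover.
rewrite integral_mkcond.
apply: (@le_trans _ _ (\int[lebesgue_measure]_t F t)%E).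
  have F0 t : (0 <= F t)%E by apply: nneseries_ge0 => k _ _; exact: f0.
  by apply: ge0_le_integral_nonmeasurable => t _; rewrite /patch; case: ifP.
rewrite /F integral_nneseries //; apply: lee_nneseries => [k _ _|k _].
  by apply: integral_ge0 => t _; exact: f0.
under eq_integral do rewrite /f EFinM.
rewrite ge0_integralZl ?lee_fin //; last first.
  by apply/measurable_EFinP; apply: measurable_indic; exact: measurable_itv.
rewrite integral_indic ?setIT //; last exact: measurable_itv.
rewrite [X in (_ * X)%E](_ : _ = (hi k - lo k)%:E) ?EFinM //.
exact: lebesgue_measure_itv_cc.
Qed.

Lemma tnth_behead_lift n (t : n.+1.-tuple R) i :
  tnth [tuple of behead t] i = tnth t (lift ord0 i).
Proof. by case/tupleP: t => x t; rewrite tnthS; congr tnth; apply: val_inj. Qed.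

Lemma box_cons n (l u : n.+1.-tuple R) (t : R) (y : n.-tuple R) :
  box l u [tuple of t :: y] <->
  thead l <= t <= thead u /\ box [tuple of behead l] [tuple of behead u] y.
Proof.
split => [h|[h0 h1] i].
  by split; [exact: (h ord0) | move=> i; rewrite !tnth_behead_lift -(tnthS t y); exact: h].
case: (unliftP ord0 i) => [j ->|->] //.
by rewrite tnthS -!tnth_behead_lift; exact: h1.
Qed.

Lemma box_vol_cons n (l u : n.+1.-tuple R) :
  box_vol l u = (thead u - thead l) * box_vol [tuple of behead l] [tuple of behead u].
Proof.
rewrite /box_vol big_ord_recl; congr (_ * _).
by apply: eq_bigr => i _; rewrite !tnth_behead_lift.
Qed.

Lemma box_vol_ge0 n (l u : n.-tuple R) :
  (forall i, tnth l i <= tnth u i) -> 0 <= box_vol l u.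
Proof. by move=> h; apply: prodr_ge0 => i _; rewrite subr_ge0. Qed.

(* By induction on the dimension: for each value [t] of the first coordinate,
   the slices at [t] of the covering boxes cover the slice of [box l u]. *)
Lemma box_vol_le_cover n (l u : n.-tuple R) (L U : nat -> n.-tuple R) (P : nat -> bool) :
  (forall i, tnth l i <= tnth u i) -> (forall k i, tnth (L k) i <= tnth (U k) i) ->
  box l u `<=` \bigcup_(k in [set k | P k]) box (L k) (U k) ->
  ((box_vol l u)%:E <= \sum_(0 <= k <oo) ((P k)%:R * box_vol (L k) (U k))%:E)%E.
Proof.
elim: n l u L U P => [|n IH] l u L U P lu LU cover.
  have [k Pk _] := cover l (fun i => match i with @Ordinal _ _ h => False_ind _ (notF h) end).
  apply: le_trans (nneseries_lim_ge k.+1 _); last first.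
    by move=> m _ _; rewrite lee_fin mulr_ge0 // box_vol_ge0.
  rewrite big_nat_recr //= Pk mul1r /box_vol !big_ord0 leeDr //.
  by rewrite sume_ge0 // => m _; rewrite lee_fin mulr_ge0 // box_vol_ge0.
pose tl (v : n.+1.-tuple R) := [tuple of behead v].
have tl_le (v w : n.+1.-tuple R) : (forall i, tnth v i <= tnth w i) ->
    forall i, tnth (tl v) i <= tnth (tl w) i.
  by move=> vw i; rewrite !tnth_behead_lift.
pose w k := (P k)%:R * box_vol (tl (L k)) (tl (U k)).
have -> : (\sum_(0 <= k <oo) ((P k)%:R * box_vol (L k) (U k))%:E =
          \sum_(0 <= k <oo) (w k * (thead (U k) - thead (L k)))%:E)%E.
  by apply: eq_eseriesr => k _; rewrite box_vol_cons /w; congr (_%:E); ring.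
rewrite box_vol_cons; apply: weighted_itv_cover => [||k|k|t tlu].
- exact: lu.
- by apply: box_vol_ge0; exact: tl_le.
- by rewrite mulr_ge0 // box_vol_ge0 //; exact: tl_le.
- exact: LU.
have /IH : box (tl l) (tl u) `<=` \bigcup_(k in [set k | P k &&
    (t \in `[thead (L k), thead (U k)]%classic)]) box (tl (L k)) (tl (U k)).
  move=> y ly.
  have [k Pk /box_cons[Lk LUk]] := cover _ (proj2 (box_cons l u t y) (conj tlu ly)).
  exists k => //=; rewrite Pk; apply/mem_set; rewrite /= in_itv; exact: Lk.
move=> /(_ (tl_le _ _ lu) (fun k => tl_le _ _ (LU k))) fiber; apply: (le_trans fiber).
apply: lee_nneseries => [k _ _|k _]; first by rewrite lee_fin mulr_ge0 // box_vol_ge0 //; exact: tl_le.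
by rewrite /w indicE lee_fin; case: (P k); rewrite /= ?mul1r ?mul0r // mulrC.
Qed.

End LebesgueOuterMeasure.

Section BallVolume.
Variables (R : realType) (d : nat) (nrm : d.-tuple R -> R).
Hypothesis nrmN : is_norm nrm.
Local Notation T := (d.-tuple R).

Lemma lebesgue_d_le (A B : set T) : A `<=` B -> (lebesgue_d A <= lebesgue_d B)%E.
Proof.
move=> AB; apply: ereal_inf_le_tmp => _ [l [u [lu Bcover ->]]].
by exists l, u; split => //; exact: subset_trans Bcover.
Qed.

Lemma lebesgue_d_box (l u : T) : (forall i, tnth l i <= tnth u i) ->
  ((box_vol l u)%:E <= lebesgue_d (box l u))%E.
Proof.
move=> lu; apply/ereal_infP => _ [L [U [LU cover ->]]].
have := @box_vol_le_cover R d l u L U xpredT lu LU.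
rewrite (eq_eseriesr (g := fun k => (box_vol (L k) (U k))%:E)); last by move=> k _; rewrite mul1r.
by apply => x /cover [k _ xk]; exists k.
Qed.

Lemma lebesgue_d_cball (x : T) (r : R) : 0 <= r ->
  (((2 * (r / sup_norm_const nrm)) ^+ d)%:E <= lebesgue_d (cball nrm x r))%E.
Proof.
move=> r0; have C0 := sup_norm_const_gt0 nrmN.
set e := r / sup_norm_const nrm.
have e0 : 0 <= e by rewrite divr_ge0 // ltW.
pose lo : T := [tuple tnth x i - e | i < d].
pose hi : T := [tuple tnth x i + e | i < d].
have lohi i : tnth lo i <= tnth hi i by rewrite !tnth_mktuple; lra.
apply: le_trans (lebesgue_d_le (A := box lo hi) _).
  apply: le_trans (lebesgue_d_box lohi); rewrite lee_fin /box_vol.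
  rewrite (eq_bigr (fun _ => 2 * e)); last by move=> i _; rewrite !tnth_mktuple; ring.
  by rewrite prodr_const card_ord.
move=> y yx; rewrite /cball /=.
apply: (le_trans (norm_le_sup_norm nrmN _)).
have : sup_norm (vsub y x) <= e.
  apply: sup_norm_le => // i; rewrite tnth_vsub.
  have := yx i; rewrite !tnth_mktuple => /andP[? ?].
  by rewrite ler_norml; apply/andP; split; lra.
move=> /(ler_wpM2l (ltW C0)) /le_trans; apply.
by rewrite /e mulrCA mulfV ?mulr1 // gt_eqF.
Qed.

End BallVolume.

Section DistanceToFirstPoints.
Variables (R : realType) (d : nat) (nrm : d.-tuple R -> R).
Hypothesis nrmN : is_norm nrm.
Local Notation T := (d.-tuple R).

(* [mindist a N x] is the distance from [x] to [{a 1, ..., a N}] for [N >= 1];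
   [mindist a 0 x] is the junk value [nrm (vsub x (a 1))]. *)
Fixpoint mindist (a : nat -> T) (N : nat) (x : T) : R :=
  if N is N'.+1 then Order.min (mindist a N' x) (nrm (vsub x (a N)))
  else nrm (vsub x (a 1%N)).

Lemma mindist_le a N x k : (1 <= k <= N)%N -> mindist a N x <= nrm (vsub x (a k)).
Proof.
elim: N => [|N IH] /andP[k1 kN]; first by move: (leq_trans k1 kN).
rewrite /= ge_min; move: kN; rewrite leq_eqVlt => /orP[/eqP ->|kN].
  by rewrite lexx orbT.
by rewrite IH ?k1.
Qed.

Lemma mindist_le1 a N x : mindist a N x <= nrm (vsub x (a 1%N)).
Proof. by elim: N => [|N IH] //=; rewrite ge_min IH. Qed.

Lemma mindist_attained a N x :
  exists k, (1 <= k <= maxn N 1)%N /\ mindist a N x = nrm (vsub x (a k)).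
Proof.
elim: N => [|N [k [k1N IH]]] /=; first by exists 1%N.
rewrite IH; case: leP => _; last by exists N.+1; split => //; lia.
by exists k; split => //; lia.
Qed.

Lemma mindist_ge0 a N x : 0 <= mindist a N x.
Proof. by have [k [_ ->]] := mindist_attained a N x; exact: norm_ge0. Qed.

Lemma measurable_mindist a N : measurable_fun setT (mindist a N).
Proof.
elim: N => [|N IH] /=; first exact: measurable_norm_vsub.
exact: measurable_minr IH (measurable_norm_vsub nrmN (a N.+1)).
Qed.

Lemma dist_set_first_pts a N x : (1 <= N)%N ->
  dist_set nrm x (first_pts a N) = (mindist a N x)%:E.
Proof.
move=> N1; apply/eqP; rewrite eq_le; apply/andP; split.
  have [k [kN ->]] := mindist_attained a N x.
  by apply: ereal_inf_lbound; exists (a k) => //; exists k; rewrite // (maxn_idPl N1) in kN.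
apply/ereal_infP => _ [_ [k kN <-] <-].
by rewrite lee_fin; exact: mindist_le.
Qed.

Definition set_next (a : nat -> T) (N : nat) (xi : T) : nat -> T :=
  fun k => if k == N.+1 then xi else a k.

Lemma mindist_set_next a N xi M x : (1 <= N)%N -> (M <= N)%N ->
  mindist (set_next a N xi) M x = mindist a M x.
Proof.
move=> N1; elim: M => [|M IH] MN /=; rewrite /set_next.
  by case: eqP => // e; move: e N1; lia.
rewrite IH ?(ltnW MN) //; case: eqP => // e; move: e MN; lia.
Qed.

Lemma mindist_set_next_succ a N xi x : (1 <= N)%N ->
  mindist (set_next a N xi) N.+1 x = Order.min (mindist a N x) (nrm (vsub x xi)).
Proof. by move=> N1; rewrite /= mindist_set_next // /set_next eqxx. Qed.

Lemma first_pts_set_next a N xi :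
  first_pts (set_next a N xi) N.+1 = first_pts a N `|` [set xi].
Proof.
apply/seteqP; split => y.
  move=> [k /= /andP[k1 kN] <-]; rewrite /set_next; case: eqP => [_|kN1]; first by right.
  by left; exists k => //=; rewrite k1 /=; move: kN kN1; lia.
case => [[k /= /andP[k1 kN] <-]|->].
  exists k; first by rewrite /= k1 (leq_trans kN).
  by rewrite /set_next; case: eqP => // e; move: kN; rewrite e ltnn.
by exists N.+1; [rewrite /= ltnS leqnn | rewrite /set_next eqxx].
Qed.

End DistanceToFirstPoints.

Section DiscreteDecay.
Variable R : realType.

Lemma powRN_ge_tangent (t s : R) : 0 < t <= 1 -> 0 <= s ->
  1 + s * (1 - t) <= t `^ (- s).
Proof.
move=> /andP[t0 t1] s0; rewrite /powR (gt_eqF t0).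
apply: le_trans (expR_ge1Dx _); rewrite lerD2l mulNr -mulrN.
apply: ler_wpM2l => //.
have := @le_ln1Dx R (t - 1); rewrite (_ : 1 + (t - 1) = t); [lra | ring].
Qed.

Lemma recursion_coef_gt0 (x y s K : R) : 0 < x -> x <= y ->
  y `^ (1 + s) <= K * (y - x) -> 0 < K.
Proof.
move=> x0 xy yK; rewrite ltNge; apply/negP => K0.
have yx : 0 <= y - x by rewrite subr_ge0.
have := mulr_le0_ge0 K0 yx; have := powR_gt0 (1 + s) (lt_le_trans x0 xy); lra.
Qed.

(* [powRN_ge_tangent] at [t = x / y]. *)
Lemma powRN_increment (x y s K : R) : 0 < x -> x <= y -> 0 <= s ->
  y `^ (1 + s) <= K * (y - x) -> y `^ (- s) + s / K <= x `^ (- s).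
Proof.
move=> x0 xy s0; have y0 : 0 < y by exact: lt_le_trans xy.
have ys0 : 0 < y `^ s by exact: powR_gt0.
move=> yK; have K0 := recursion_coef_gt0 x0 xy yK.
move: yK; rewrite powRD ?powRr1 ?(ltW y0) ?(gt_eqF y0) ?implybT // => yK.
set t := x / y.
have t01 : 0 < t <= 1 by rewrite divr_gt0 //= ler_pdivrMr // mul1r.
have -> : x `^ (- s) = t `^ (- s) * y `^ (- s).
  rewrite -powRM ?(ltW y0) //; last by case/andP: t01 => /ltW.
  by rewrite /t divfK // gt_eqF.
have ysK : y `^ s / K <= 1 - t.
  have -> : 1 - t = (y - x) / y by rewrite /t; field; rewrite gt_eqF.
  rewrite ler_pdivlMr // mulrAC ler_pdivrMr //.
  by rewrite mulrC [(y - x) * K]mulrC.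
have iy : 0 < (y `^ s)^-1 by rewrite invr_gt0.
rewrite powRN; apply: le_trans (ler_wpM2r (ltW iy) (powRN_ge_tangent t01 s0)).
rewrite mulrDl mul1r lerD2l.
apply: le_trans (ler_wpM2r (ltW iy) (ler_wpM2l s0 ysK)).
by rewrite -mulrA mulrAC mulfV ?gt_eqF // mul1r.
Qed.

(* [u N ^ (-s)] increases by at least [s / K] at each step. *)
Lemma powRN_linear_growth (u : nat -> R) (K s : R) : 0 < s ->
  (forall N, 0 <= u N) -> (forall N, (1 <= N)%N -> u N.+1 <= u N) ->
  (forall N, (1 <= N)%N -> u N `^ (1 + s) <= K * (u N - u N.+1)) ->
  exists2 c, 0 < c & forall N, (1 <= N)%N -> u N = 0 \/ c * N%:R <= u N `^ (- s).
Proof.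
move=> s0 u0 ud uK.
pose K1 := Num.max K 1.
have K10 : 0 < K1 by rewrite lt_max ltr01 orbT.
pose c1 := if 0 < u 1%N then u 1%N `^ (- s) else 1.
have c10 : 0 < c1 by rewrite /c1; case: ifP => // u1; exact: powR_gt0.
exists (Num.min (s / K1) c1); first by rewrite lt_min c10 divr_gt0.
elim => [//|N IH] _.
have [->|N0] := eqVneq N 0%N.
  have [|u1] := eqVneq (u 1%N) 0; first by left.
  right; have u1_gt0 : 0 < u 1%N by rewrite lt_def u1 u0.
  by rewrite mulr1 ge_min /c1 u1_gt0 lexx orbT.
have N1 : (1 <= N)%N by rewrite lt0n.
have [|uN1] := eqVneq (u N.+1) 0; first by left.
right; have uN1_gt0 : 0 < u N.+1 by rewrite lt_def uN1 u0.
have uN0 : 0 < u N by exact: lt_le_trans (ud N N1).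
have [uN|IH'] := IH N1; first by move: uN0; rewrite uN ltxx.
have step := powRN_increment uN1_gt0 (ud N N1) (ltW s0) (uK N N1).
have K0 := recursion_coef_gt0 uN1_gt0 (ud N N1) (uK N N1).
apply: le_trans step; rewrite -addn1 natrD mulrDr mulr1 lerD //.
by rewrite ge_min ler_pM2l // lef_pV2 ?posrE // le_max lexx.
Qed.

Lemma recursion_decay_rate (u : nat -> R) (K p r : R) : 0 < p -> 0 < r ->
  (forall N, 0 <= u N) -> (forall N, (1 <= N)%N -> u N.+1 <= u N) ->
  (forall N, (1 <= N)%N -> u N `^ (1 + r / p) <= K * (u N - u N.+1)) ->
  exists C, forall N, (1 <= N)%N -> N%:R `^ r^-1 * u N `^ p^-1 <= C.
Proof.
move=> p0 r0 u0 ud uK.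
have [c c0 cN] := powRN_linear_growth (divr_gt0 r0 p0) u0 ud uK.
exists (c^-1 `^ r^-1) => N N1.
have [->|cNu] := cN N N1; first by rewrite powR0 ?mulr0 ?powR_ge0 // invr_eq0 gt_eqF.
have uN0 : 0 < u N.
  rewrite lt_def u0 andbT; apply: contraTneq cNu => ->.
  by rewrite powR0 ?oppr_eq0 ?gt_eqF ?divr_gt0 // -ltNge mulr_gt0 // ltr0n.
have urp0 : 0 < u N `^ (r / p) by exact: powR_gt0.
have -> : N%:R `^ r^-1 * u N `^ p^-1 = (N%:R * u N `^ (r / p)) `^ r^-1.
  rewrite powRM ?ler0n ?ltW // -powRrM; congr (_ * _ `^ _).
  by field; rewrite !gt_eqF.
apply: ge0_ler_powR; rewrite ?nnegrE ?invr_ge0 ?mulr_ge0 ?ler0n ?(ltW r0) ?(ltW c0) ?(ltW urp0) //.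
move: cNu; rewrite powRN -(ler_pM2r urp0) mulVf ?gt_eqF // => cNu.
by rewrite -(ler_pM2l c0) mulrA mulfV ?gt_eqF.
Qed.

End DiscreteDecay.

Section Distortion.
Variables (R : realType) (d : nat) (nrm : d.-tuple R -> R) (p : R)
  (mu : probability (d.-tuple R) R).
Hypothesis nrmN : is_norm nrm.
Hypothesis p0 : 0 < p.
Hypothesis moment_p : (\int[mu]_xi ((nrm xi `^ p)%:E) < +oo)%E.
Local Notation T := (d.-tuple R).

Definition distortion (a : nat -> T) (N : nat) : \bar R :=
  (\int[mu]_x ((mindist nrm a N x) `^ p)%:E)%E.

Lemma measurable_mindist_powR a N :
  measurable_fun setT (fun x => ((mindist nrm a N x) `^ p)%:E).
Proof.
apply/measurable_EFinP.
exact: measurableT_comp (measurable_powR p) (measurable_mindist nrmN a N).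
Qed.

Lemma measurable_norm_powR : measurable_fun setT (fun x : T => (nrm x `^ p)%:E).
Proof.
apply/measurable_EFinP.
exact: measurableT_comp (measurable_powR p) (measurable_norm nrmN).
Qed.

Lemma distortion_ge0 a N : (0 <= distortion a N)%E.
Proof. by apply: integral_ge0 => x _; rewrite lee_fin powR_ge0. Qed.

Lemma mindist_powR_le a N x :
  mindist nrm a N x `^ p <= 2 `^ p * (nrm x `^ p + nrm (a 1%N) `^ p).
Proof.
apply: le_trans (powR_add_le (norm_ge0 nrmN x) (norm_ge0 nrmN (a 1%N)) p0).
apply: ge0_ler_powR; rewrite ?nnegrE ?mindist_ge0 ?addr_ge0 ?norm_ge0 ?(ltW p0) //.
exact: le_trans (mindist_le1 nrm a N x) (norm_vsub_le nrmN _ _).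
Qed.

Lemma distortion_fin_num a N : distortion a N \is a fin_num.
Proof.
rewrite ge0_fin_numE ?distortion_ge0 //; set c := nrm (a 1%N).
have moment_fin : (\int[mu]_x (nrm x `^ p)%:E)%E \is a fin_num.
  by rewrite ge0_fin_numE ?moment_p //; apply: integral_ge0 => x _; rewrite lee_fin powR_ge0.
apply: (@le_lt_trans _ _
  (\int[mu]_x ((2 `^ p)%:E * ((nrm x `^ p)%:E + (c `^ p)%:E)))%E).
  apply: ge0_le_integral => //.
  - by move=> x _; rewrite lee_fin powR_ge0.
  - exact: measurable_mindist_powR.
  - by apply: emeasurable_funM => //; apply: emeasurable_funD => //; exact: measurable_norm_powR.
  - by move=> x _; rewrite -EFinD -EFinM lee_fin mindist_powR_le.
rewrite ge0_integralZl //; last 2 first.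
- by apply: emeasurable_funD => //; exact: measurable_norm_powR.
- by move=> x _; rewrite adde_ge0 // lee_fin powR_ge0.
rewrite ge0_integralD //; last 3 first.
- by move=> x _; rewrite lee_fin powR_ge0.
- exact: measurable_norm_powR.
- by move=> x _; rewrite lee_fin powR_ge0.
have -> : (\int[mu]_x (c `^ p)%:E = (c `^ p)%:E)%E.
  by rewrite integral_cst // [X in (_ * X)%E](_ : _ = 1%E) ?mule1 //; exact: probability_setT.
by rewrite -(fineK moment_fin) -EFinD -EFinM ltry.
Qed.

Lemma qerr_first_pts a N : (1 <= N)%N ->
  qerr nrm mu p (first_pts a N) = ((fine (distortion a N)) `^ p^-1)%:E.
Proof.
move=> N1; rewrite /qerr -poweR_EFin fineK ?distortion_fin_num //.
by congr (_ `^ _)%E; apply: eq_integral => x _; rewrite dist_set_first_pts // poweR_EFin.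
Qed.

End Distortion.

Section GreedyQuantization.
Variables (R : realType) (d : nat) (nrm : d.-tuple R -> R) (p : R)
  (mu : probability (d.-tuple R) R) (a : nat -> d.-tuple R) (b : R).
Hypothesis nrmN : is_norm nrm.
Hypothesis p0 : 0 < p.
Hypothesis moment_p : (\int[mu]_xi ((nrm xi `^ p)%:E) < +oo)%E.
Hypothesis greedy : greedy_seq nrm mu p a.
Hypothesis b0 : 0 < b.
Hypothesis b_lt_half : b < 2^-1.
Local Notation T := (d.-tuple R).
Local Notation mindist := (mindist nrm).
Local Notation distortion := (distortion nrm p mu).
Local Notation Psi := (maxfun nrm mu a b).

Definition greedy_gain : R := (1 - b) `^ p - b `^ p.

Lemma one_sub_b_gt_b : b < 1 - b.
Proof. by move: b_lt_half; lra. Qed.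

Lemma greedy_gain_gt0 : 0 < greedy_gain.
Proof.
have bb := one_sub_b_gt_b.
rewrite subr_gt0; apply: gt0_ltr_powR; rewrite ?nnegrE ?(ltW b0) //.
exact: ltW (lt_trans b0 bb).
Qed.

Definition rdistortion (N : nat) : R := fine (distortion a N).

Lemma rdistortion_ge0 N : 0 <= rdistortion N.
Proof. by rewrite fine_ge0 // distortion_ge0. Qed.

Lemma distortionE a' N : distortion a' N = (fine (distortion a' N))%:E.
Proof. by rewrite fineK // distortion_fin_num. Qed.

Lemma measurable_cball (x : T) r : measurable (cball nrm x r).
Proof.
have := measurable_norm_vsub nrmN x measurableT (measurable_itv `]-oo, r]).
by rewrite setTI; congr measurable; apply/seteqP; split => y /=; rewrite in_itv.
Qed.

(* Inside B(xi, b D), with D the distance from xi to a^(N), the point xi is at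
   distance at most b D while a^(N) is at distance at least (1 - b) D. *)
Lemma greedy_pointwise_gain N xi x : (1 <= N)%N ->
  mindist (set_next a N xi) N.+1 x `^ p + greedy_gain * mindist a N xi `^ p *
     \1_(cball nrm xi (b * mindist a N xi)) x
  <= mindist a N x `^ p.
Proof.
move=> N1; rewrite mindist_set_next_succ //.
set D := mindist a N xi; set m := mindist a N x; set y := nrm (vsub x xi).
have m0 : 0 <= m by exact: mindist_ge0.
have y0 : 0 <= y by exact: norm_ge0.
have D0 : 0 <= D by exact: mindist_ge0.
have my0 : 0 <= Order.min m y by rewrite le_min m0 y0.
rewrite indicE; have [/set_mem xB|_] := boolP (x \in _); last first.
  by rewrite mulr0 addr0 ge0_ler_powR ?nnegrE ?ge_min ?lexx ?(ltW p0).
have Dm : (1 - b) * D <= m.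
  have [k [kN mE]] := mindist_attained nrm a N x; rewrite (maxn_idPl N1) in kN.
  rewrite /m mE.
  have := mindist_le nrm a xi kN; have := norm_vsub_triangle nrmN xi x (a k).
  rewrite (norm_vsubC nrmN xi x) -/y -/D; rewrite /cball /= -/y in xB; lra.
have min_le : Order.min m y `^ p <= b `^ p * D `^ p.
  by rewrite -powRM ?(ltW b0) // ge0_ler_powR ?nnegrE ?ge_min ?xB ?orbT ?mulr_ge0 ?(ltW b0) ?(ltW p0).
have m_ge : (1 - b) `^ p * D `^ p <= m `^ p.
  have b1 : 0 <= 1 - b by have := one_sub_b_gt_b; lra.
  by rewrite -powRM // ge0_ler_powR ?nnegrE ?mulr_ge0 ?(ltW p0).
by rewrite mulr1 /greedy_gain; lra.
Qed.

Lemma greedy_decrease N xi : (1 <= N)%N ->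
  greedy_gain * mindist a N xi `^ p * fine (mu (cball nrm xi (b * mindist a N xi)))
  <= rdistortion N - rdistortion N.+1.
Proof.
move=> N1; set D := mindist a N xi; set B := cball nrm xi (b * D).
set a' := set_next a N xi.
have mB : measurable B by exact: measurable_cball.
have cD0 : 0 <= greedy_gain * D `^ p by rewrite mulr_ge0 ?powR_ge0 // ltW // greedy_gain_gt0.
have a'_worse : rdistortion N.+1 <= fine (distortion a' N.+1).
  have := greedy N xi; rewrite -first_pts_set_next.
  rewrite !(qerr_first_pts nrmN p0 moment_p _ (ltn0Sn N)).
  rewrite lee_fin; apply: ler_of_powRV p0; first exact: rdistortion_ge0.
  exact/fine_ge0/distortion_ge0.
have gain : (distortion a' N.+1 + (greedy_gain * D `^ p)%:E * mu B <= distortion a N)%E.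
  have mf := measurableT_comp (measurable_powR p) (measurable_mindist nrmN a' N.+1).
  rewrite /distortion -integral_add_indic // => [|x]; last exact: powR_ge0.
  apply: ge0_le_integral_nonmeasurable => x _.
    by rewrite lee_fin addr_ge0 ?powR_ge0 // mulr_ge0 // indicE.
  by rewrite lee_fin greedy_pointwise_gain.
move: gain; rewrite distortionE (distortionE a) -(fineK (fin_num_measure mu B mB)).
rewrite -EFinM -EFinD lee_fin -/(rdistortion N) => gain.
rewrite lerBrDr addrC; apply: le_trans gain.
exact: lerD a'_worse (lexx _).
Qed.

Lemma rdistortion_nonincreasing N : (1 <= N)%N -> rdistortion N.+1 <= rdistortion N.
Proof.
move=> N1; rewrite -subr_ge0; apply: le_trans (greedy_decrease (vzero R d) N1).
by rewrite !mulr_ge0 ?powR_ge0 ?fine_ge0 ?measure_ge0 // ltW // greedy_gain_gt0.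
Qed.

Definition maxfun_exp : R := p / (p + d%:R).

Lemma maxfun_exp_gt0 : 0 < maxfun_exp.
Proof. by rewrite /maxfun_exp divr_gt0 // (lt_le_trans p0) // lerDl ler0n. Qed.

Definition ball_vol_coef : R := (2 * (b / sup_norm_const nrm)) ^+ d.

Lemma ball_vol_coef_gt0 : 0 < ball_vol_coef.
Proof. by rewrite /ball_vol_coef exprn_gt0 // mulr_gt0 // divr_gt0 // sup_norm_const_gt0. Qed.

Lemma ratio_ball_le_maxfun N x : (1 <= N)%N ->
  (ratio_ball mu (cball nrm x (b * mindist a N x)) <= Psi x)%E.
Proof.
move=> N1; apply: ereal_sup_ubound; exists N => //=.
by rewrite dist_set_first_pts.
Qed.

Lemma mindist_ball_le_maxfun N x : (1 <= N)%N ->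
  let m := fine (mu (cball nrm x (b * mindist a N x))) in
  0 < m -> ((ball_vol_coef * mindist a N x ^+ d / m)%:E <= Psi x)%E.
Proof.
move=> N1 m m0; have := ratio_ball_le_maxfun x N1; rewrite /ratio_ball.
have -> : (mu (cball nrm x (b * mindist a N x)) == 0%E) = false.
  by apply/negbTE; apply: contraTneq m0 => muB0; rewrite /m muB0 ltxx.
apply: le_trans; rewrite EFinM lee_wpmul2r ?lee_fin ?invr_ge0 ?(ltW m0) //.
have := lebesgue_d_cball nrmN x (mulr_ge0 (ltW b0) (mindist_ge0 nrmN a N x)).
rewrite (_ : 2 * _ = 2 * (b / sup_norm_const nrm) * mindist a N x); last by ring.
by rewrite exprMn.
Qed.

Definition step_coef N eps : R :=
  (rdistortion N - rdistortion N.+1 + eps) / (greedy_gain * ball_vol_coef).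

Lemma step_coef_gt0 N eps : (1 <= N)%N -> 0 < eps -> 0 < step_coef N eps.
Proof.
move=> N1 eps0; have := rdistortion_nonincreasing N1; rewrite -subr_ge0 => dec.
rewrite divr_gt0 ?mulr_gt0 ?ball_vol_coef_gt0 ?greedy_gain_gt0 //; lra.
Qed.

Lemma mindist_powR_le_step N x eps : (1 <= N)%N -> 0 < eps ->
  let m := fine (mu (cball nrm x (b * mindist a N x))) in 0 < m ->
  mindist a N x `^ p <=
  (step_coef N eps * (ball_vol_coef * mindist a N x ^+ d / m)) `^ maxfun_exp.
Proof.
move=> N1 eps0 m m0; have K0 := step_coef_gt0 N1 eps0.
have gm0 : 0 < greedy_gain * m by rewrite mulr_gt0 // greedy_gain_gt0.
rewrite (_ : step_coef N eps * _ = step_coef N eps * ball_vol_coef / m * mindist a N x ^+ d);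
  last by ring.
apply: powR_le_mixed; rewrite ?mindist_ge0 //.
  by apply: divr_ge0 (ltW m0); apply: mulr_ge0 (ltW K0) (ltW ball_vol_coef_gt0).
have -> : step_coef N eps * ball_vol_coef / m =
          (rdistortion N - rdistortion N.+1 + eps) / (greedy_gain * m).
  by rewrite /step_coef; field; rewrite !gt_eqF ?ball_vol_coef_gt0 ?greedy_gain_gt0.
have := greedy_decrease x N1; rewrite -/m => decrease.
by rewrite ler_pdivlMr // mulrA mulrC mulrA; lra.
Qed.

Lemma mindist_powR_le_maxfun N x eps : (1 <= N)%N -> 0 < eps ->
  ((mindist a N x `^ p)%:E <=
   (step_coef N eps `^ maxfun_exp)%:E * (Psi x `^ maxfun_exp))%E.
Proof.
move=> N1 eps0; set D := mindist a N x; set B := cball nrm x (b * D).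
have K0 := step_coef_gt0 N1 eps0; have q0 := maxfun_exp_gt0.
have [muB0|muB_neq0] := eqVneq (mu B) 0%E.
  have := ratio_ball_le_maxfun x N1; rewrite /ratio_ball -/D -/B muB0 eqxx leye_eq.
  move=> /eqP ->; rewrite poweRyr ?gt_eqF // mulry gtr0_sg ?powR_gt0 // mul1e.
  exact: leey.
set m := fine (mu B).
have m0 : 0 < m.
  rewrite lt_def fine_ge0 ?measure_ge0 // andbT.
  apply: contra_neq muB_neq0 => mE.
  by rewrite -(fineK (fin_num_measure _ _ (measurable_cball x (b * D)))) -/m mE.
have ratio_le := mindist_ball_le_maxfun N1 m0; rewrite -/D -/B -/m in ratio_le.
have r0 : 0 <= ball_vol_coef * D ^+ d / m.
  apply: divr_ge0 (ltW m0); apply: mulr_ge0 (exprn_ge0 _ (mindist_ge0 nrmN a N x)).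
  exact: ltW ball_vol_coef_gt0.
have ratio_le_q :
    (((ball_vol_coef * D ^+ d / m) `^ maxfun_exp)%:E <= Psi x `^ maxfun_exp)%E.
  rewrite -poweR_EFin; apply: (gt0_ler_poweR (ltW q0) _ _ ratio_le).
    by rewrite in_itv /= lee_fin r0 leey.
  by rewrite in_itv /= leey andbT (le_trans _ ratio_le) ?lee_fin.
apply: le_trans (lee_wpmul2l _ ratio_le_q); last by rewrite lee_fin powR_ge0.
by rewrite -EFinM lee_fin -powRM ?(ltW K0) ?r0 // mindist_powR_le_step.
Qed.

Hypothesis maxfun_integrable : (\int[mu]_xi (Psi xi `^ maxfun_exp) < +oo)%E.

Definition maxfun_int : R := fine (\int[mu]_xi (Psi xi `^ maxfun_exp)).

Lemma maxfun_int_fin_num : (\int[mu]_xi (Psi xi `^ maxfun_exp))%E \is a fin_num.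
Proof.
rewrite ge0_fin_numE ?maxfun_integrable //.
by apply: integral_ge0 => x _; exact: poweR_ge0.
Qed.

Lemma maxfun_int_ge0 : 0 <= maxfun_int.
Proof. by rewrite fine_ge0 //; apply: integral_ge0 => x _; exact: poweR_ge0. Qed.

Lemma rdistortion_le_maxfun_int N eps : (1 <= N)%N -> 0 < eps ->
  rdistortion N <= step_coef N eps `^ maxfun_exp * maxfun_int.
Proof.
move=> N1 eps0; have Kq0 := powR_gt0 maxfun_exp (step_coef_gt0 N1 eps0).
have h : (((step_coef N eps `^ maxfun_exp)^-1 * rdistortion N)%:E <=
           \int[mu]_xi (Psi xi `^ maxfun_exp))%E.
  rewrite EFinM /rdistortion fineK; last exact: distortion_fin_num nrmN p0 moment_p a N.
  rewrite /distortion -ge0_integralZl ?lee_fin ?invr_ge0 ?(ltW Kq0) //; last 2 first.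
  - exact: measurable_mindist_powR.
  - by move=> x _; rewrite lee_fin powR_ge0.
  apply: ge0_le_integral_nonmeasurable => x _.
    by rewrite -EFinM lee_fin mulr_ge0 ?powR_ge0 // invr_ge0 ltW.
  apply: le_trans (lee_wpmul2l _ (mindist_powR_le_maxfun x N1 eps0)) _.
    by rewrite lee_fin invr_ge0 ltW.
  by rewrite muleA -EFinM mulVf ?gt_eqF // mul1e.
rewrite -(fineK maxfun_int_fin_num) lee_fin -/maxfun_int in h.
by rewrite mulrC -ler_pdivrMr // mulrC.
Qed.

(* Let [eps] tend to [0] in [rdistortion_le_maxfun_int] raised to the power
   [maxfun_exp^-1 = 1 + d / p]. *)
Lemma rdistortion_recursion N : (1 <= N)%N ->
  rdistortion N `^ (1 + d%:R / p) <=
  maxfun_int `^ maxfun_exp^-1 / (greedy_gain * ball_vol_coef) * (rdistortion N - rdistortion N.+1).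
Proof.
move=> N1; set C := maxfun_int `^ _ / _.
have C0 : 0 <= C.
  by rewrite divr_ge0 ?powR_ge0 // ltW // mulr_gt0 ?ball_vol_coef_gt0 // greedy_gain_gt0.
have -> : 1 + d%:R / p = maxfun_exp^-1.
  by rewrite /maxfun_exp invf_div; field; rewrite gt_eqF.
have qi : 0 < maxfun_exp^-1 by rewrite invr_gt0 maxfun_exp_gt0.
have eps_bound eps : 0 < eps ->
    rdistortion N `^ maxfun_exp^-1 <= (rdistortion N - rdistortion N.+1 + eps) * C.
  move=> eps0; have K0 := ltW (step_coef_gt0 N1 eps0).
  move/(ge0_ler_powR (ltW qi)): (rdistortion_le_maxfun_int N1 eps0).
  rewrite !nnegrE rdistortion_ge0 mulr_ge0 ?powR_ge0 ?maxfun_int_ge0 // => /(_ isT isT).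
  rewrite powRM ?powR_ge0 ?maxfun_int_ge0 // -powRrM mulfV ?gt_eqF ?maxfun_exp_gt0 //.
  rewrite powRr1 // (_ : step_coef N eps * _ = (rdistortion N - rdistortion N.+1 + eps) * C) //.
  by rewrite /step_coef /C; ring.
apply/ler_addgt0Pr => e e0.
have C10 : 0 < C + 1 by lra.
apply: le_trans (eps_bound _ (divr_gt0 e0 C10)) _.
rewrite mulrDl [_ * C]mulrC lerD2l.
by rewrite mulrAC ler_pdivrMr // ler_pM2l // lerDl ler01.
Qed.

End GreedyQuantization.

Theorem theorem3p1 (R : realType) (d : nat) (nrm : d.-tuple R -> R)
    (p : R) (mu : probability (d.-tuple R) R) (a : nat -> d.-tuple R) (b : R) :
  (1 <= d)%N ->
  is_norm nrm ->
  0 < p ->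
  (\int[mu]_xi ((nrm xi `^ p)%:E) < +oo)%E ->
  greedy_seq nrm mu p a ->
  0 < b -> b < 2^-1 ->
  (\int[mu]_xi (maxfun nrm mu a b xi `^ (p / (p + d%:R))) < +oo)%E ->
  (limn_esup (fun N : nat =>
      ((N%:R `^ (d%:R^-1))%:E * qerr nrm mu p (first_pts a N))%E) < +oo)%E.
Proof.
move=> d1 nrmN p0 moment_p greedy b0 b_lt_half maxfun_integrable.
have d0 : 0 < d%:R :> R by rewrite ltr0n.
have [C rateC] := recursion_decay_rate p0 d0
  (rdistortion_ge0 nrm p mu a) (rdistortion_nonincreasing nrmN p0 moment_p greedy b0 b_lt_half)
  (rdistortion_recursion nrmN p0 moment_p greedy b0 b_lt_half maxfun_integrable).
apply: (bounded_limn_esup_lty (B := Num.max C 0)) => -[|N].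
  by rewrite powR0 ?invr_eq0 ?pnatr_eq0 -?lt0n // mul0e lee_fin le_max lexx orbT.
rewrite (qerr_first_pts nrmN p0 moment_p _ (ltn0Sn N)) -EFinM lee_fin le_max.
by rewrite rateC.
Qed.
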